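(* For $\alpha\in\mathbb{K}^\times$ let $A_{2,\alpha}$ be the evolution algebra over the field $\mathbb{K}$ with natural basis $\{e_1,e_2\}$ such that $e_1^2=e_2$ and $e_2^2=\alpha e_1$. For $\alpha,\alpha'\in\mathbb{K}^\times$, $A_{2,\alpha}$ is isomorphic to $A_{2,\alpha'}$ as a $\mathbb{K}$-algebra if and only if $\overline\alpha=\overline{\alpha'}$ or $\overline\alpha=\overline{\alpha'}^2$, where classes are taken in $G_3=\mathbb{K}^\times/(\mathbb{K}^\times)^3$.
   Context: An evolution algebra over $\mathbb{K}$ is a $\mathbb{K}$-algebra with a basis $\{e_i\}$ (natural basis) such that $e_ie_j=0$ for $i\neq j$. $\overline\rho$ denotes the class of $\rho\in\mathbb{K}^\times$ in $G_3$. *)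

From HB Require Import structures.
From mathcomp Require Import all_boot all_order all_algebra.
Set Implicit Arguments. Unset Strict Implicit. Unset Printing Implicit Defensive.
Import GRing.Theory.
Local Open Scope ring_scope.

(* An n-dimensional evolution algebra over K is K^n (row vectors) with natural
   basis e_i (delta row vectors), e_i e_j = 0 for i <> j and
   e_i^2 = \sum_j C i j e_j, where C is the structure matrix. *)
Definition evo_mul (K : fieldType) (n : nat) (C : 'M[K]_n) (u v : 'rV[K]_n)
  : 'rV[K]_n := \row_j \sum_i u 0 i * v 0 i * C i j.

(* Structure matrix of A_{2,alpha}: e_1^2 = e_2, e_2^2 = alpha e_1
   (indices 0,1 stand for e_1,e_2). *)
Definition A2_struct (K : fieldType) (alpha : K) : 'M[K]_2 :=
  \matrix_(i < 2, j < 2)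
    (if (i == 0 :> nat) && (j == 1 :> nat) then 1
     else if (i == 1 :> nat) && (j == 0 :> nat) then alpha else 0).

Definition evo_iso (K : fieldType) (n : nat) (C C' : 'M[K]_n) : Prop :=
  exists f : 'rV[K]_n -> 'rV[K]_n,
    [/\ forall (a : K) (u v : 'rV[K]_n), f (a *: u + v) = a *: f u + f v,
        bijective f &
        forall u v, f (evo_mul C u v) = evo_mul C' (f u) (f v)].

Definition G3_eq (K : fieldType) (a b : K) : Prop :=
  exists c : K, c != 0 /\ a = b * c ^+ 3.

From mathcomp Require Import all_boot all_order all_algebra perm.
From mathcomp Require Import ring.
Set Implicit Arguments. Unset Strict Implicit. Unset Printing Implicit Defensive.
Import GRing.Theory.
Local Open Scope ring_scope.

(* In A_{2,alpha} we have (e_1^2)^2 = e_2^2 = alpha e_1, so an isomorphism f onto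
   A_{2,alpha'} sends e_1 to a nonzero a = (x, y) with alpha a = (a^2)^2, i.e.
   alpha x = alpha' x^4 and alpha y = alpha'^2 y^4; a nonzero coordinate gives
   alpha = alpha' x^3 or alpha = alpha'^2 y^3.  Conversely, the monomial maps
   e_1 |-> c e_1, e_2 |-> c^2 e_2 and e_1 |-> c e_2, e_2 |-> alpha' c^2 e_1 are
   isomorphisms from A_{2, alpha' c^3} and from A_{2, alpha'^2 c^3} onto
   A_{2,alpha'}. *)

Lemma ord2P (j : 'I_2) : j = 0 \/ j = 1.
Proof. by case: j => [[|[|//]] ?]; [left | right]; apply: val_inj. Qed.

Lemma sum_ord2 (V : nmodType) (F : 'I_2 -> V) : \sum_i F i = F 0 + F 1.
Proof. by rewrite big_ord_recl big_ord1; congr (_ + F _); apply: val_inj. Qed.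

Lemma G3_eq_quartic (K : fieldType) (a b x : K) :
  x != 0 -> a * x = b * x ^+ 4 -> G3_eq a b.
Proof.
move=> x_neq0 eq_ax; exists x; split=> //.
by apply: (mulIf x_neq0); rewrite eq_ax; ring.
Qed.

(* The isomorphism sends e_(s j) to d j e'_j. *)
Lemma evo_iso_monomial (K : fieldType) (n : nat) (C C' : 'M[K]_n)
    (s : 'S_n) (d : 'I_n -> K) :
  (forall i, d i != 0) ->
  (forall i j, d i ^+ 2 * C' i j = d j * C (s i) (s j)) ->
  evo_iso C C'.
Proof.
move=> d_neq0 dC.
exists (fun u : 'rV[K]_n => \row_j (d j * u 0 (s j))); split.
- by move=> a u v; apply/rowP => j; rewrite !mxE mulrDr mulrCA.
- exists (fun u : 'rV[K]_n => \row_j (u 0 ((s^-1)%g j) / d ((s^-1)%g j))) => u;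
    apply/rowP => j; rewrite !mxE.
  + by rewrite permKV mulrC mulKf.
  + by rewrite permK mulrC divfK.
- move=> u v; apply/rowP => j; rewrite !mxE (reindex_inj (@perm_inj _ s)).
  rewrite mulr_sumr; apply: eq_bigr => i _; rewrite !mxE.
  transitivity (u 0 (s i) * v 0 (s i) * (d i ^+ 2 * C' i j)); last by ring.
  by rewrite dC; ring.
Qed.

Section TwoDimensional.
Variable K : fieldType.
Implicit Types (alpha : K) (u v : 'rV[K]_2).

Lemma A2_mul0 alpha u v : evo_mul (A2_struct alpha) u v 0 0 = alpha * u 0 1 * v 0 1.
Proof. by rewrite mxE sum_ord2 !mxE /=; ring. Qed.

Lemma A2_mul1 alpha u v : evo_mul (A2_struct alpha) u v 0 1 = u 0 0 * v 0 0.
Proof. by rewrite mxE sum_ord2 !mxE /=; ring. Qed.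

Local Notation sq alpha u := (evo_mul (A2_struct alpha) u u).

Lemma A2_sqr_sqr0 alpha u : sq alpha (sq alpha u) 0 0 = alpha * u 0 0 ^+ 4.
Proof. by rewrite A2_mul0 !A2_mul1; ring. Qed.

Lemma A2_sqr_sqr1 alpha u : sq alpha (sq alpha u) 0 1 = alpha ^+ 2 * u 0 1 ^+ 4.
Proof. by rewrite A2_mul1 !A2_mul0; ring. Qed.

Lemma A2_sqr_sqr_e1 alpha : sq alpha (sq alpha (delta_mx 0 0)) = alpha *: delta_mx 0 0.
Proof.
apply/rowP => j; case: (ord2P j) => ->;
  by rewrite ?A2_sqr_sqr0 ?A2_sqr_sqr1 !mxE /=; ring.
Qed.

Lemma A2_iso_G3_eq alpha alpha' :
  evo_iso (A2_struct alpha) (A2_struct alpha') ->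
  G3_eq alpha alpha' \/ G3_eq alpha (alpha' ^+ 2).
Proof.
move=> [f [f_lin f_bij f_mul]].
have f0 : f 0 = 0 by have := f_lin (-1) 0 0; rewrite !scaleN1r !addNr.
have fZ a u : f (a *: u) = a *: f u by rewrite -[a *: u]addr0 f_lin f0 addr0.
pose a := f (delta_mx 0 0).
have a_quartic : alpha *: a = sq alpha' (sq alpha' a).
  by rewrite -fZ -A2_sqr_sqr_e1 !f_mul.
have a_neq0 : a != 0.
  apply: contra_neq (oner_neq0 K) => a0.
  have e1_0 : delta_mx 0 0 = 0 :> 'rV[K]_2 by apply: (bij_inj f_bij); rewrite f0.
  by have := congr1 (fun u : 'rV[K]_2 => u 0 0) e1_0; rewrite !mxE.
have [x0 | x_neq0] := eqVneq (a 0 0) 0.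
- right; apply: (@G3_eq_quartic _ _ _ (a 0 1)).
    apply: contra_neq a_neq0 => y0.
    by apply/rowP => j; case: (ord2P j) => ->; rewrite mxE.
  by rewrite -A2_sqr_sqr1 -a_quartic mxE.
- by left; apply: (G3_eq_quartic x_neq0); rewrite -A2_sqr_sqr0 -a_quartic mxE.
Qed.

Lemma A2_iso_scale alpha c :
  c != 0 -> evo_iso (A2_struct (alpha * c ^+ 3)) (A2_struct alpha).
Proof.
move=> c_neq0.
apply: (@evo_iso_monomial _ _ _ _ 1 (fun i => if i == 0 then c else c ^+ 2)).
  by move=> i; case: ifP; rewrite ?expf_neq0.
by move=> i j; rewrite !perm1 !mxE; case: (ord2P i) => ->; case: (ord2P j) => -> /=; ring.
Qed.

Lemma A2_iso_swap alpha c : alpha != 0 -> c != 0 ->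
  evo_iso (A2_struct (alpha ^+ 2 * c ^+ 3)) (A2_struct alpha).
Proof.
move=> alpha_neq0 c_neq0.
apply: (@evo_iso_monomial _ _ _ _ (tperm 0 1)
                          (fun i => if i == 0 then alpha * c ^+ 2 else c)).
  by move=> i; case: ifP; rewrite ?mulf_neq0 ?expf_neq0.
move=> i j; case: (ord2P i) => ->; case: (ord2P j) => ->;
  by rewrite ?tpermL ?tpermR !mxE /=; ring.
Qed.

End TwoDimensional.

Theorem lemma3p3 (K : fieldType) (alpha alpha' : K) :
  alpha != 0 -> alpha' != 0 ->
  (evo_iso (A2_struct alpha) (A2_struct alpha') <->
   (G3_eq alpha alpha' \/ G3_eq alpha (alpha' ^+ 2))).
Proof.
move=> _ alpha'_neq0; split; first exact: A2_iso_G3_eq.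
by case=> -[c [c_neq0 ->]]; [exact: A2_iso_scale | exact: A2_iso_swap].
Qed.
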